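(* Let $x,y\in\mathrm{Cay}$. Then $[x]\ge[y]$ if and only if $\gamma(x)\ge\gamma(y)$ (containment of permutations). Equivalently, the bijection $[x]\mapsto\gamma(x)$ from the set $[\mathrm{Cay}]$ of equivalence classes to $\mathcal{S}$ maps the set of classes avoiding $[y]$ (i.e. classes $[x]$ with $[x]\not\ge[y]$) onto $\mathcal{S}(\gamma(y))$, the set of permutations avoiding $\gamma(y)$.
   Context: A Cayley permutation of length $n$ is a word of positive integers in which every integer from $1$ to its maximum occurs; $\mathrm{Cay}$ is the set of all of them, $\mathcal{S}\subseteq\mathrm{Cay}$ the set of permutations. For Cayley permutations, $y\le x$ (containment) means there are indices $i_1<\dots<i_k$ ($k$ the length of $y$) with $x(i_s)<x(i_t)\iff y(s)<y(t)$ and $x(i_s)=x(i_t)\iff y(s)=y(t)$. For $x\in\mathrm{Cay}_n$, $\gamma(x)\in\mathcal{S}_n$ is obtained by sorting the pairs $(x(i),i)$ increasingly by first coordinate, ties by decreasing second coordinate, and reading off the second coordinates. Write $x\sim y$ iff $\gamma(x)=\gamma(y)$; $[y]$ is the class of $y$ and $[\mathrm{Cay}]$ the set of classes. For classes, $[x]\ge[y]$ means $x'\ge y'$ for some $x'\in[x]$, $y'\in[y]$. $\mathcal{S}(\tau)$ is the set of permutations avoiding $\tau$. *)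

(* Words are represented as seq nat (values are 1-based). *)
From mathcomp Require Import all_boot.
Set Implicit Arguments. Unset Strict Implicit. Unset Printing Implicit Defensive.

Definition wmax (x : seq nat) : nat := foldr maxn 0 x.

Definition is_cay (x : seq nat) : bool :=
  all (fun v => 0 < v) x && all (fun k => k \in x) (iota 1 (wmax x)).

Definition is_perm (x : seq nat) : bool := is_cay x && uniq x.

Definition order_iso (a b : seq nat) : bool :=
  (size a == size b) &&
  [forall s : 'I_(size a), forall t : 'I_(size a),
     ((nth 0 a s < nth 0 a t) == (nth 0 b s < nth 0 b t)) &&
     ((nth 0 a s == nth 0 a t) == (nth 0 b s == nth 0 b t))].

Definition contains (x y : seq nat) : Prop :=
  exists m : bitseq, size m = size x /\ order_iso (mask m x) y.

Definition gamma_rel (p q : nat * nat) : bool :=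
  (p.1 < q.1) || ((p.1 == q.1) && (q.2 <= p.2)).

Definition gamma (x : seq nat) : seq nat :=
  map snd (sort gamma_rel (zip x (iota 1 (size x)))).

Definition class_ge (x y : seq nat) : Prop :=
  exists x' y', is_cay x' /\ is_cay y' /\ gamma x' = gamma x /\
                gamma y' = gamma y /\ contains x' y'.

From mathcomp Require Import all_boot zify.
Set Implicit Arguments. Unset Strict Implicit. Unset Printing Implicit Defensive.

(* [gamma w] lists the positions of [w] sorted by the total order [gamma_le w]
   (smaller value first, ties broken by later position).  Sorting the positions
   of a subword by the restriction of this order yields the corresponding
   subsequence of [gamma w], so the gamma of a subword of [x] is a pattern of
   [gamma x]; conversely a pattern of [gamma x] is the gamma of the subword at
   the positions it selects, because order-isomorphic permutations of 1..n are
   equal.  As [gamma] only depends on the order type of a word and every word is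
   order-isomorphic to a Cayley permutation, containment of classes is
   containment of gammas; the second statement follows since [gamma] maps
   Cayley permutations onto permutations. *)

Lemma eq_in_sort (T : eqType) (r1 r2 : rel T) (s : seq T) :
  total r1 -> total r2 -> transitive r2 -> antisymmetric r2 ->
  {in s &, r1 =2 r2} -> sort r1 s = sort r2 s.
Proof.
move=> r1_total r2_total r2_trans r2_anti r12.
apply: (sorted_eq r2_trans r2_anti); last by rewrite perm_sort perm_sym perm_sort.
  rewrite -(@eq_in_sorted _ (mem s) r1 r2) //; first exact: sort_sorted.
  by apply/allP=> x; rewrite mem_sort.
exact: sort_sorted.
Qed.

Lemma sorted_ltn_nth_mono (I : seq nat) : sorted ltn I ->
  {in [pred n | n < size I] &, {mono nth 0 I : i j / i < j}}.
Proof.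
by move=> sI; apply/leqW_mono_in/leq_mono_in/(sorted_ltn_nth ltn_trans).
Qed.

Lemma sorted_ltn_nth_inj (I : seq nat) : sorted ltn I ->
  {in [pred n | n < size I] &, injective (nth 0 I)}.
Proof.
by move=> sI; apply/incn_inj_in/leq_mono_in/(sorted_ltn_nth ltn_trans).
Qed.

Lemma count_ltn_iota c a k : count (fun v => v < c) (iota a k) = minn (c - a) k.
Proof.
elim: k a => [|k IHk] a /=; first by rewrite minn0.
by rewrite IHk; case: (ltnP a c) => /=; lia.
Qed.

Lemma leq_wmax s x : x \in s -> x <= wmax s.
Proof.
elim: s => //= a s IHs; rewrite inE => /orP[/eqP->|xs]; first exact: leq_maxl.
exact: leq_trans (IHs xs) (leq_maxr _ _).
Qed.

Lemma wmax_leq s c : all (fun v => v <= c) s -> wmax s <= c.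
Proof. by elim: s => //= a s IHs /andP[ac sc]; rewrite geq_max ac IHs. Qed.

Section GammaOrder.

Variable w : seq nat.

Definition gamma_le : rel nat := fun i j =>
  (nth 0 w i < nth 0 w j) || ((nth 0 w i == nth 0 w j) && (j <= i)).

Definition gamma0 : seq nat := sort gamma_le (iota 0 (size w)).

Lemma gamma_le_trans : transitive gamma_le.
Proof.
move=> j i k; rewrite /gamma_le.
case/orP=> [ij|/andP[/eqP ij ji]]; case/orP=> [jk|/andP[/eqP jk kj]].
- by rewrite (ltn_trans ij jk).
- by rewrite -jk ij.
- by rewrite ij jk.
- by rewrite ij jk eqxx (leq_trans kj ji) orbT.
Qed.

Lemma gamma_le_anti : antisymmetric gamma_le.
Proof. by move=> i j; rewrite /gamma_le; lia. Qed.

Lemma gamma_le_total : total gamma_le.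
Proof.
move=> i j; rewrite /gamma_le.
case: (ltngtP (nth 0 w i) (nth 0 w j)) => //= _.
by case: (leqP j i) => //= /ltnW ->.
Qed.

End GammaOrder.

Lemma gammaE w : gamma w = map succn (gamma0 w).
Proof.
have zipE : zip w (iota 1 (size w)) = map (fun i => (nth 0 w i, i.+1)) (iota 0 (size w)).
  apply: (@eq_from_nth _ (0, 0)); first by rewrite size_zip size_map !size_iota minnn.
  move=> i; rewrite size_zip size_iota minnn => lti.
  by rewrite nth_zip ?size_iota // (nth_map 0) ?size_iota // !nth_iota.
(* [gamma_rel] pulled back along [i |-> (w_i, i.+1)] is [gamma_le w] by conversion. *)
by rewrite /gamma zipE sort_map -map_comp.
Qed.

Lemma size_gamma w : size (gamma w) = size w.
Proof. by rewrite gammaE size_map size_sort size_iota. Qed.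

Lemma perm_gamma_iota w : perm_eq (gamma w) (iota 1 (size w)).
Proof.
rewrite gammaE (iotaDl 1 0); apply: (@perm_map _ _ succn).
by rewrite perm_sort.
Qed.

Lemma order_isoP a b : reflect
  (size a = size b /\ forall s t, s < size a -> t < size a ->
     (nth 0 a s < nth 0 a t) = (nth 0 b s < nth 0 b t) /\
     (nth 0 a s == nth 0 a t) = (nth 0 b s == nth 0 b t))
  (order_iso a b).
Proof.
apply: (iffP andP) => [[/eqP ab /forallP iso]|[ab iso]].
  split=> // s t lts ltt.
  by have /forallP/(_ (Ordinal ltt))/andP[/eqP-> /eqP->] := iso (Ordinal lts).
split; first exact/eqP.
apply/forallP=> s; apply/forallP=> t.
by have [-> ->] := iso s t (ltn_ord s) (ltn_ord t); rewrite !eqxx.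
Qed.

Lemma order_iso_sym a b : order_iso a b -> order_iso b a.
Proof.
move/order_isoP=> [ab iso]; apply/order_isoP; split=> // s t.
by rewrite -ab => lts ltt; have [-> ->] := iso s t lts ltt.
Qed.

Lemma order_iso_trans a b c : order_iso a b -> order_iso b c -> order_iso a c.
Proof.
move=> /order_isoP[ab iso_ab] /order_isoP[bc iso_bc].
apply/order_isoP; split=> [|s t lts ltt]; first by rewrite ab.
have [-> ->] := iso_ab s t lts ltt.
by rewrite ab in lts ltt; have [-> ->] := iso_bc s t lts ltt.
Qed.

Lemma order_iso_map (f g : nat -> nat) s :
  {in s &, forall x y, (f x < f y) = (g x < g y)} ->
  {in s &, forall x y, (f x == f y) = (g x == g y)} ->
  order_iso (map f s) (map g s).
Proof.
move=> fg_lt fg_eq; apply/order_isoP; rewrite !size_map; split=> // a b lta ltb.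
by rewrite !(nth_map 0) // fg_lt ?fg_eq ?mem_nth.
Qed.

Lemma gamma_order_iso a b : order_iso a b -> gamma a = gamma b.
Proof.
move/order_isoP=> [ab iso]; rewrite !gammaE /gamma0 -ab; congr map.
apply: eq_in_sort.
- exact: gamma_le_total.
- exact: gamma_le_total.
- exact: gamma_le_trans.
- exact: gamma_le_anti.
move=> i j; rewrite !mem_iota /gamma_le => lti ltj.
by have [-> ->] := iso i j lti ltj.
Qed.

Lemma sort_gamma_le_sorted w I : sorted ltn I ->
  sort (gamma_le w) I = map (nth 0 I) (gamma0 (map (nth 0 w) I)).
Proof.
move=> sI; rewrite -[in LHS](mkseq_nth 0 I) /mkseq sort_map /gamma0 size_map.
congr map; apply: eq_in_sort.
- by move=> i j; apply: gamma_le_total.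
- exact: gamma_le_total.
- exact: gamma_le_trans.
- exact: gamma_le_anti.
move=> i j; rewrite !mem_iota /= => lti ltj.
rewrite /gamma_le !(nth_map 0) // [nth 0 I j <= _]leqNgt [j <= i]leqNgt.
by rewrite (sorted_ltn_nth_mono sI).
Qed.

Lemma order_iso_sort_gamma_le w I : sorted ltn I ->
  order_iso (map succn (sort (gamma_le w) I)) (gamma (map (nth 0 w) I)).
Proof.
move=> sI; rewrite sort_gamma_le_sorted // gammaE -map_comp.
apply: order_iso_map => i j; rewrite /gamma0 !mem_sort !mem_iota size_map /= => lti ltj.
- by rewrite !ltnS (sorted_ltn_nth_mono sI).
- by rewrite !eqSS (inj_in_eq (sorted_ltn_nth_inj sI)).
Qed.

Lemma contains_gamma_mask w m : contains (gamma w) (gamma (mask m w)).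
Proof.
set I := mask m (iota 0 (size w)).
have sI : sorted ltn I by apply/(sorted_mask ltn_trans)/iota_ltn_sorted.
exists (map (mem I) (gamma0 w)); split; first by rewrite size_map size_gamma size_sort size_iota.
rewrite -[in mask m w](mkseq_nth 0 w) /mkseq -map_mask -/I gammaE -map_mask -filter_mask.
rewrite /gamma0 (filter_sort (@gamma_le_total w) (@gamma_le_trans w)).
by rewrite -mask_filter ?iota_uniq //; apply: order_iso_sort_gamma_le.
Qed.

Lemma perm_iota_nth_rank r s : perm_eq r (iota 1 (size r)) -> s < size r ->
  nth 0 r s = (count (fun t => nth 0 r t < nth 0 r s) (iota 0 (size r))).+1.
Proof.
move=> r_perm lts.
have : nth 0 r s \in iota 1 (size r) by rewrite -(perm_mem r_perm) mem_nth.
rewrite mem_iota => /andP[rs_gt0 rs_le].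
have rE : map (nth 0 r) (iota 0 (size r)) = r := mkseq_nth 0 r.
rewrite -(count_map (nth 0 r) (fun v => v < nth 0 r s)) rE.
by rewrite (permP r_perm) count_ltn_iota; lia.
Qed.

Lemma order_iso_perm_iota_eq p q :
  perm_eq p (iota 1 (size p)) -> perm_eq q (iota 1 (size q)) ->
  order_iso p q -> p = q.
Proof.
move=> p_perm q_perm /order_isoP[pq iso].
apply: (eq_from_nth (x0 := 0) pq) => s lts.
rewrite (perm_iota_nth_rank p_perm lts) (perm_iota_nth_rank q_perm) -?pq //.
congr succn; apply: eq_in_count => t; rewrite mem_iota => ltt.
by have [-> _] := iso t s ltt lts.
Qed.

Lemma sort_gamma_le_subseq w J : subseq J (gamma0 w) ->
  sort (gamma_le w) [seq i <- iota 0 (size w) | i \in J] = J.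
Proof.
move=> sub_J; have J_gamma0 := mem_subseq sub_J.
have sorted_gamma0 : sorted (gamma_le w) (gamma0 w) by apply/sort_sorted/gamma_le_total.
apply: (sorted_eq (@gamma_le_trans w) (@gamma_le_anti w)).
- exact/sort_sorted/gamma_le_total.
- exact: (subseq_sorted (@gamma_le_trans w) sub_J).
rewrite perm_sort; apply: uniq_perm.
- by rewrite filter_uniq ?iota_uniq.
- by rewrite (subseq_uniq sub_J) // sort_uniq iota_uniq.
move=> i; rewrite mem_filter andb_idr // => /J_gamma0.
by rewrite mem_sort.
Qed.

Lemma gamma_mask_of_contains w y : contains (gamma w) (gamma y) ->
  exists2 m, size m = size w & gamma (mask m w) = gamma y.
Proof.
case=> M [_ iso]; set J := mask M (gamma0 w).
have sub_J : subseq J (gamma0 w) by apply: mask_subseq.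
set m := map (mem J) (iota 0 (size w)).
have sI : sorted ltn [seq i <- iota 0 (size w) | i \in J].
  exact/(sorted_filter ltn_trans)/iota_ltn_sorted.
exists m; first by rewrite size_map size_iota.
apply: order_iso_perm_iota_eq; rewrite ?size_gamma ?perm_gamma_iota //.
apply: order_iso_trans iso; rewrite [gamma w]gammaE -map_mask -/J.
rewrite -(sort_gamma_le_subseq sub_J).
rewrite -[in mask m w](mkseq_nth 0 w) /mkseq -map_mask /m -filter_mask.
exact/order_iso_sym/order_iso_sort_gamma_le.
Qed.

Lemma exists_cay_order_iso u : exists2 v, is_cay v & order_iso u v.
Proof.
set s := sort leq (undup u); set v := map (fun a => (index a s).+1) u.
have s_uniq : uniq s by rewrite sort_uniq undup_uniq.
have s_ltn : sorted ltn s by rewrite ltn_sorted_uniq_leq s_uniq (sort_sorted leq_total).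
have mem_s a : (a \in s) = (a \in u) by rewrite mem_sort mem_undup.
exists v.
  apply/andP; split; first by apply/allP => _ /mapP[a _ ->].
  have v_le : wmax v <= size s.
    by apply: wmax_leq; apply/allP => _ /mapP[a au ->]; rewrite index_mem mem_s.
  apply/allP => k; rewrite mem_iota => /andP[k_gt0 k_le].
  have ltk : k.-1 < size s by lia.
  apply/mapP; exists (nth 0 s k.-1); first by rewrite -mem_s mem_nth.
  by rewrite index_uniq //; lia.
rewrite -{1}[u]map_id; apply: order_iso_map => a b; rewrite -!mem_s => a_s b_s.
- rewrite ltnS -{1}(nth_index 0 a_s) -{1}(nth_index 0 b_s).
  by rewrite (sorted_ltn_nth_mono s_ltn) ?inE ?index_mem.
- by rewrite eqSS (inj_in_eq (@index_inj _ 0 s)).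
Qed.

Lemma is_permE p : is_perm p = perm_eq p (iota 1 (size p)).
Proof.
apply/idP/idP => [/andP[/andP[p_pos p_onto] p_uniq] | p_perm].
  have p_iota : perm_eq p (iota 1 (wmax p)).
    apply: uniq_perm; rewrite ?iota_uniq // => v.
    apply/idP/idP => [vp | /(allP p_onto)//]; rewrite mem_iota.
    by have := allP p_pos v vp; have := leq_wmax vp; lia.
  by rewrite (perm_size p_iota) size_iota.
have mem_p v : (v \in p) = (0 < v < (size p).+1) by rewrite (perm_mem p_perm) mem_iota.
rewrite /is_perm /is_cay (perm_uniq p_perm) iota_uniq andbT.
have p_le : wmax p <= size p by apply/wmax_leq/allP => v; rewrite mem_p; lia.
apply/andP; split; apply/allP => v; rewrite ?mem_iota mem_p; lia.
Qed.

(* The witness is the inverse of [p], with 0-based values. *)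
Lemma gamma_onto_perm p : perm_eq p (iota 1 (size p)) -> exists x, gamma x = p.
Proof.
move=> p_perm; set n := size p; set x := map (index^~ p) (iota 1 n).
have p_uniq : uniq p by rewrite (perm_uniq p_perm) iota_uniq.
have mem_p v : (v \in p) = (0 < v < n.+1) by rewrite (perm_mem p_perm) mem_iota.
have x_at i : i < n -> nth 0 x (nth 0 p i).-1 = i.
  move=> lti; have /andP[pi_gt0 pi_le] : 0 < nth 0 p i < n.+1 by rewrite -mem_p mem_nth.
  rewrite (nth_map 0) ?nth_iota ?size_iota; try lia.
  by rewrite add1n prednK // index_uniq.
exists x; rewrite gammaE.
suff -> : gamma0 x = map predn p.
  by rewrite -map_comp map_id_in // => v; rewrite mem_p /=; lia.
apply: (sorted_eq (@gamma_le_trans x) (@gamma_le_anti x)).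
- exact/sort_sorted/gamma_le_total.
- rewrite -(mkseq_nth 0 p) /mkseq -map_comp sorted_map -/n.
  apply: (@sub_in_sorted _ (fun i => i < n) ltn); last exact: iota_ltn_sorted.
    move=> i j lti ltj ltij; rewrite /= /gamma_le (x_at i lti) (x_at j ltj).
    exact/orP/or_introl.
  by apply/allP => i; rewrite mem_iota.
rewrite perm_sort perm_sym /x size_map size_iota.
have -> : iota 0 n = map predn (iota 1 n) by rewrite (iotaDl 1 0) -map_comp map_id.
exact: perm_map.
Qed.

Lemma class_ge_gamma x y : is_cay x ->
  class_ge x y <-> contains (gamma x) (gamma y).
Proof.
move=> x_cay; split.
  case=> x' [y' [_ [_ [<- [<- [m [_ iso]]]]]]].
  by rewrite -(gamma_order_iso iso); apply: contains_gamma_mask.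
case/gamma_mask_of_contains=> m size_m gamma_m.
have [v v_cay iso] := exists_cay_order_iso (mask m x).
exists x, v; do 4?split=> //; last by exists m.
by rewrite -(gamma_order_iso iso).
Qed.

Theorem theorem4p9 :
  (forall x y : seq nat, is_cay x -> is_cay y ->
     (class_ge x y <-> contains (gamma x) (gamma y))) /\
  (forall y : seq nat, is_cay y ->
     forall p : seq nat,
       (is_perm p /\ ~ contains p (gamma y)) <->
       (exists x : seq nat, is_cay x /\ ~ class_ge x y /\ gamma x = p)).
Proof.
split=> [x y x_cay _ | y _ p]; first exact: class_ge_gamma.
split=> [[p_perm p_avoids] | [x [x_cay [x_avoids <-]]]].
  rewrite is_permE in p_perm.
  have [x gamma_x] := gamma_onto_perm p_perm.
  have [v v_cay iso] := exists_cay_order_iso x.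
  have gamma_v : gamma v = p by rewrite -(gamma_order_iso iso).
  by exists v; rewrite class_ge_gamma // gamma_v.
rewrite is_permE size_gamma perm_gamma_iota -class_ge_gamma //.
Qed.
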